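(* Let $q$ be a prime power and $\mathcal{C}\subseteq\mathbb{F}_q^n$ a linear code of dimension $k$. Let $U\subseteq[n]$ be the set of coordinates $i$ such that some codeword of $\mathcal{C}$ is nonzero at $i$, and for $i\in U$ let $w_i = \min\{\mathrm{wt}(c) : c\in\mathcal{C},\ c_i\neq 0\}$. Then $\sum_{i\in U} \frac{1}{w_i} \le k$.
   Context: $\mathrm{wt}(c)$ is the number of nonzero coordinates of $c$. *)

From HB Require Import structures.
From mathcomp Require Import all_boot all_order all_algebra all_field.
Set Implicit Arguments. Unset Strict Implicit. Unset Printing Implicit Defensive.
Import Order.TTheory GRing.Theory Num.Theory.
Local Open Scope ring_scope.

Definition wt (F : finFieldType) (n : nat) (c : 'rV[F]_n) : nat :=
  #|[set i : 'I_n | c 0 i != 0]|.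

Definition code_support (F : finFieldType) (n : nat) (C : {vspace 'rV[F]_n})
  : {set 'I_n} :=
  [set i : 'I_n | [exists c : 'rV[F]_n, (c \in C) && (c 0 i != 0)]].

(* w_i = min { wt c : c \in C, c_i <> 0 }  (the default value n is only
   used when no such codeword exists, i.e. for i outside the support;
   for i in the support the minimum is the true minimum since wt c <= n). *)
Definition minwt (F : finFieldType) (n : nat) (C : {vspace 'rV[F]_n}) (i : 'I_n)
  : nat :=
  \big[minn/n]_(c : 'rV[F]_n | (c \in C) && (c 0 i != 0)) wt c.

From HB Require Import structures.
From mathcomp Require Import all_boot all_order all_algebra all_field.
Import Order.TTheory GRing.Theory Num.Theory.
Local Open Scope ring_scope.

(* Induction on the dimension.  Let c be a nonzero codeword of minimum weight
   d and S its support: every i in S has w_i = d, so S contributes exactly 1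
   to the sum.  Zeroing the coordinates in S maps C onto a code C' of smaller
   dimension (c lies in the kernel), and for i outside S this map keeps the
   codewords nonzero at i while not increasing weights, so i stays in the
   support of C' and w'_i <= w_i.  Hence the rest of the sum is bounded by
   that of C', which is at most dim C' <= dim C - 1. *)

Section MinimumWeights.
Variables (F : finFieldType) (n : nat).
Implicit Types (C : {vspace 'rV[F]_n}) (x c : 'rV[F]_n) (S : {set 'I_n}).

Lemma wt_gt0 x i : x 0 i != 0 -> (0 < wt x)%N.
Proof. by move=> xi; rewrite /wt card_gt0; apply/set0Pn; exists i; rewrite inE. Qed.

Lemma wt_le_n x : (wt x <= n)%N.
Proof. by rewrite /wt -[leqRHS]card_ord max_card. Qed.

Lemma wt_eq0 x : (wt x == 0)%N = (x == 0).
Proof.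
rewrite /wt cards_eq0; apply/eqP/eqP => [x0|->].
  by apply/rowP => i; apply/eqP; move/setP/(_ i): x0; rewrite mxE !inE => /negbFE.
by apply/setP => i; rewrite !inE mxE eqxx.
Qed.

Lemma minwt_le_wt C i x : x \in C -> x 0 i != 0 -> (minwt C i <= wt x)%N.
Proof.
move=> Cx xi; have := @bigmin_le_cond _ _ _ n x
  (fun y => (y \in C) && (y 0 i != 0)) (@wt F n).
by rewrite minEnat leEnat Cx xi; apply.
Qed.

Lemma leq_minwt C i b : (b <= n)%N ->
  (forall x, x \in C -> x 0 i != 0 -> (b <= wt x)%N) -> (b <= minwt C i)%N.
Proof.
move=> bn bwt; have := @le_bigmin _ _ _ (index_enum _) (@wt F n) n b
  (fun x => (x \in C) && (x 0 i != 0)).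
by rewrite minEnat leEnat; apply=> // x /andP[Cx xi]; exact: bwt.
Qed.

Lemma minwt_le_n C i : (minwt C i <= n)%N.
Proof.
rewrite /minwt; elim/big_ind: _ => //= [p q pn _|x _]; first by rewrite geq_min pn.
exact: wt_le_n.
Qed.

Lemma minwt_gt0 C i : (0 < minwt C i)%N.
Proof. by apply: leq_minwt => [|x _ /wt_gt0 //]; apply: leq_ltn_trans (ltn_ord i). Qed.

Definition min_weight_codeword C c :=
  [/\ c \in C, c != 0 & forall x, x \in C -> x != 0 -> (wt c <= wt x)%N].

Lemma min_weight_codeword_exists C : C != 0%VS -> exists c, min_weight_codeword C c.
Proof.
move=> C_nz; have pick_nz : vpick C != 0 by rewrite vpick0.
have [c /andP[Cc c_nz] cmin] := @arg_minnP _ (vpick C)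
  (fun x => (x \in C) && (x != 0)) (@wt F n) (introT andP (conj (memv_pick C) pick_nz)).
by exists c; split=> // x Cx x_nz; rewrite cmin ?Cx.
Qed.

Lemma minwt_min_weight_codeword {C c j} :
  min_weight_codeword C c -> c 0 j != 0 -> minwt C j = wt c.
Proof.
case=> Cc _ cmin cj; apply/anti_leq; rewrite minwt_le_wt //=.
apply: leq_minwt => [|x Cx xj]; first exact: wt_le_n.
by apply: cmin => //; apply: contraNneq xj => ->; rewrite mxE.
Qed.

Lemma code_support0 : code_support (0%VS : {vspace 'rV[F]_n}) = set0.
Proof.
apply/setP => i; rewrite !inE; apply/existsP => -[x /andP[]].
by rewrite memv0 => /eqP->; rewrite mxE eqxx.
Qed.

Definition puncture S : 'End('rV[F]_n) :=
  linfun (mulmxr (diag_mx (\row_j (j \notin S)%:R))).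

Lemma punctureE S x j : puncture S x 0 j = if j \in S then 0 else x 0 j.
Proof. by rewrite lfunE /= mul_mx_diag !mxE; case: (j \in S); rewrite ?mulr0 ?mulr1. Qed.

Lemma wt_puncture S x : (wt (puncture S x) <= wt x)%N.
Proof.
apply/subset_leq_card/subsetP => j; rewrite !inE punctureE.
by case: (j \in S); rewrite ?eqxx.
Qed.

Lemma dim_puncture_lt {C S c} : c \in C -> c != 0 ->
  [set j | c 0 j != 0] \subset S -> (\dim (puncture S @: C) < \dim C)%N.
Proof.
move=> Cc c_nz suppS; rewrite -(limg_ker_dim (puncture S) C) -add1n leq_add2r.
have c_ker : c \in (C :&: lker (puncture S))%VS.
  rewrite memv_cap Cc memv_ker; apply/eqP/rowP => j; rewrite punctureE mxE.
  by case: ifP => // /negbT jS; apply/eqP; apply: contraR jS => cj;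
    apply: (subsetP suppS); rewrite inE.
have := dimvS (U := <[c]>%VS) (V := (C :&: lker (puncture S))%VS).
by rewrite dim_vline c_nz -memvE; apply.
Qed.

Lemma code_support_puncture C S :
  code_support C :\: S \subset code_support (puncture S @: C).
Proof.
apply/subsetP => i /setDP[/[!inE] /existsP[x /andP[Cx xi]] iS].
apply/existsP; exists (puncture S x).
by rewrite memv_img // punctureE (negbTE iS).
Qed.

Lemma minwt_puncture C S i : i \notin S -> (minwt (puncture S @: C) i <= minwt C i)%N.
Proof.
move=> iS; apply: leq_minwt => [|x Cx xi]; first exact: minwt_le_n.
apply: leq_trans (wt_puncture S x).
by rewrite minwt_le_wt ?memv_img // punctureE (negbTE iS).
Qed.

Definition inv_minwt_sum C : rat := \sum_(i in code_support C) (minwt C i)%:R^-1.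

Lemma inv_minwt_sum_punctureW C S :
  \sum_(i in code_support C :\: S) (minwt C i)%:R^-1 <= inv_minwt_sum (puncture S @: C).
Proof.
rewrite /inv_minwt_sum [leRHS](big_setID (code_support C :\: S)) /=.
rewrite (setIidPr (code_support_puncture C S)) -[leLHS]addr0 lerD //.
  apply: ler_sum => i /setDP[_ iS].
  by rewrite lef_pV2 ?posrE ?ltr0n ?minwt_gt0 // ler_nat minwt_puncture.
by rewrite sumr_ge0 // => i _; rewrite invr_ge0 ler0n.
Qed.

Lemma inv_minwt_sum_min_support {C c} : min_weight_codeword C c ->
  \sum_(i in code_support C :&: [set j | c 0 j != 0]) (minwt C i)%:R^-1 = 1 :> rat.
Proof.
move=> cmin; have [Cc c_nz _] := cmin; set S := [set j | c 0 j != 0].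
have SU : S \subset code_support C.
  by apply/subsetP => j /[!inE] cj; apply/existsP; exists c; rewrite Cc.
rewrite (setIidPr SU) (eq_bigr (fun=> (wt c)%:R^-1)) => [|j /[!inE] cj].
  by rewrite sumr_const (_ : #|S| = wt c) // -[_ *+ wt c]mulr_natr mulVf // pnatr_eq0 wt_eq0.
by rewrite (minwt_min_weight_codeword cmin cj).
Qed.

Lemma inv_minwt_sum_le_dim C : inv_minwt_sum C <= (\dim C)%:R.
Proof.
have [m] := ubnP (\dim C); elim: m C => // m IHm C dimCm.
have [->|/min_weight_codeword_exists[c cmin]] := eqVneq C 0%VS.
  by rewrite /inv_minwt_sum code_support0 big_set0.
have [Cc c_nz _] := cmin; set S := [set j | c 0 j != 0].
have dimlt := dim_puncture_lt Cc c_nz (subxx S).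
rewrite /inv_minwt_sum (big_setID S) /= (inv_minwt_sum_min_support cmin).
apply: le_trans (_ : 1 + (\dim (puncture S @: C))%:R <= _); last first.
  by rewrite addrC natr1 ler_nat.
rewrite lerD2l (le_trans (inv_minwt_sum_punctureW C S)) // IHm //.
exact: leq_trans dimlt _.
Qed.

End MinimumWeights.

Theorem claim5p4 (F : finFieldType) (n k : nat) (C : {vspace 'rV[F]_n}) :
  \dim C = k ->
  \sum_(i in code_support C) ((minwt C i)%:R : rat)^-1 <= k%:R.
Proof. by move=> <-; apply: inv_minwt_sum_le_dim. Qed.
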